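(* Let $G$ be a non-abelian finite $p$-group such that $Z(G)$ has rank $r$. Suppose $\rho_1,\dots,\rho_k$ are irreducible ordinary representations of $G$ such that $\bigoplus_{i=1}^k\rho_i$ is a faithful projective representation of $G$. (i) If $Z(G)\not\cong(\mathbb{Z}/2\mathbb{Z})^2$ and $Z(G)\not\cong(\mathbb{Z}/2\mathbb{Z})^4$, then $k>r$. (ii) If $Z(G)\cong(\mathbb{Z}/2\mathbb{Z})^2$ or $(\mathbb{Z}/2\mathbb{Z})^4$, then $k>r-1$.
   Context: Rank means minimal number of generators. An ordinary representation $\rho$ of $G$ is faithful as a projective representation if the only $g\in G$ with $\rho(g)$ a scalar matrix is $g=1$. *)

From mathcomp Require Import all_boot all_order all_algebra all_fingroup all_solvable all_field all_character.
From mathcomp Require Import mxrepresentation.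
Set Implicit Arguments. Unset Strict Implicit. Unset Printing Implicit Defensive.
Import GRing.Theory Num.Theory.
Local Open Scope group_scope.

(* rank = minimal number of generators: library notion 'm(A) = gen_rank A (abelian.v) *)

Definition elemab2 (n : nat) : {set 'rV['Z_2]_n} := [set: 'rV['Z_2]_n].

From mathcomp Require Import all_boot all_order all_algebra all_fingroup all_solvable all_field all_character.
From mathcomp Require Import mxrepresentation.
From mathcomp Require Import ring.
Set Implicit Arguments. Unset Strict Implicit. Unset Printing Implicit Defensive.
Import GRing.Theory Num.Theory UnityRootTheory.
Local Open Scope group_scope.

(* By Schur's lemma every irreducible rho_i sends a central x to a scalar
   lambda_i(x), and lambda_i is a homomorphism on Z(G).  On an elementary
   abelian p-subgroup E of Z(G) of order p^r the ratios lambda_i / lambda_0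
   (i = 1..k-1) take values in the p-th roots of unity, and projective
   faithfulness makes x |-> (lambda_i(x) / lambda_0(x))_i injective on E.
   Hence p^r <= p^(k-1), i.e. r < k, which proves both parts at once. *)

Section CentralMode.

Variables (gT : finGroupType) (G : {group gT}) (n : nat).
Variable rG : mx_representation algC G n.
Hypothesis irrG : mx_irreducible rG.

(* The scalar by which rG acts on a central element, read off from the trace;
   an analogue of irr_mode for arbitrary irreducible representations. *)
Definition cent_mode x : algC := (\tr (rG x) / n%:R)%R.

Lemma irr_repr_deg_gt0 : (0 < n)%N.
Proof. by case/mx_irrP: irrG. Qed.

Lemma cent_mode_scalar x a : rG x = (a%:M)%R -> cent_mode x = a.
Proof.
move=> rGx; rewrite /cent_mode rGx mxtrace_scalar -[(a *+ n)%R]mulr_natr mulfK //.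
by rewrite pnatr_eq0 -lt0n irr_repr_deg_gt0.
Qed.

Lemma irr_repr_center_scalar : {in 'Z(G), forall x, rG x = (cent_mode x)%:M%R}.
Proof.
move=> x /setIP[Gx cGx].
have [a rGx]: exists a, rG x = (a%:M)%R.
  apply/is_scalar_mxP/(mx_abs_irr_cent_scalar (group_closure_closed_field irrG)).
  by apply/centgmxP=> y Gy; rewrite -!repr_mxM // (centP cGx).
by rewrite {1}rGx (cent_mode_scalar rGx).
Qed.

Lemma cent_mode1 : cent_mode 1 = 1%R.
Proof. by apply: cent_mode_scalar; rewrite repr_mx1. Qed.

Lemma cent_modeM : {in 'Z(G) &, {morph cent_mode : x y / x * y >-> (x * y)%R}}.
Proof.
move=> x y Zx Zy; apply: cent_mode_scalar.
rewrite repr_mxM ?(subsetP (center_sub G)) //.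
by rewrite !irr_repr_center_scalar // -scalar_mxM.
Qed.

Lemma cent_modeX x m : x \in 'Z(G) -> cent_mode (x ^+ m) = (cent_mode x ^+ m)%R.
Proof.
move=> Zx; elim: m => [|m IHm]; first by rewrite cent_mode1.
by rewrite expgS exprS cent_modeM ?groupX // IHm.
Qed.

Lemma cent_mode_neq0 x : x \in 'Z(G) -> cent_mode x != 0%R.
Proof.
move=> Zx; have := cent_modeM Zx (groupVr Zx).
rewrite mulgV cent_mode1; apply: contra_eq_neq => ->.
by rewrite mul0r oner_neq0.
Qed.

Lemma cent_modeV x : x \in 'Z(G) -> cent_mode x^-1 = ((cent_mode x)^-1)%R.
Proof.
move=> Zx; apply: (mulfI (cent_mode_neq0 Zx)).
by rewrite -cent_modeM ?groupV // mulgV cent_mode1 divff ?cent_mode_neq0.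
Qed.

End CentralMode.

Section PrimRootIndex.

Variables (n : nat) (w : algC).
Hypothesis prim_w : n.+1.-primitive_root w.

Definition prim_root_index (c : algC) : 'I_n.+1 :=
  odflt ord0 [pick j : 'I_n.+1 | (c == w ^+ j)%R].

Lemma prim_root_indexK c : (c ^+ n.+1 = 1)%R -> (w ^+ prim_root_index c = c)%R.
Proof.
move=> cn1; have [i ->] := prim_rootP prim_w cn1.
by rewrite /prim_root_index; case: pickP => [j /eqP -> //|/(_ i)]; rewrite eqxx.
Qed.

End PrimRootIndex.

Section ProjectivelyFaithfulCenter.

Variables (gT : finGroupType) (G : {group gT}) (k : nat).
Variables (deg : 'I_k.+1 -> nat) (rho : forall i, mx_representation algC G (deg i)).
Hypothesis irr_rho : forall i, mx_irreducible (rho i).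

Local Notation lambda i := (cent_mode (rho i)).

Definition mode_ratio (j : 'I_k) x : algC := (lambda (lift ord0 j) x / lambda ord0 x)%R.

Lemma eq_mode_ratio_scalar x y : x \in 'Z(G) -> y \in 'Z(G) ->
    (forall j, mode_ratio j x = mode_ratio j y) ->
  forall i, rho i (x * y^-1) = ((lambda ord0 x / lambda ord0 y)%:M)%R.
Proof.
move=> Zx Zy eq_ratio i.
rewrite irr_repr_center_scalar ?groupM ?groupV // cent_modeM ?groupV //.
rewrite cent_modeV //; congr (_%:M)%R.
case: (unliftP ord0 i) => [j ->|-> //].
have nz i' := cent_mode_neq0 (irr_rho i').
rewrite -[lambda _ x](divfK (nz ord0 x Zx)) -/(mode_ratio j x) eq_ratio /mode_ratio.
by field; rewrite !nz.
Qed.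

Lemma mode_ratio_unity_root p j x : x \in 'Z(G) -> x ^+ p = 1 ->
  (mode_ratio j x ^+ p = 1)%R.
Proof.
move=> Zx xp1; rewrite exprMn exprVn -!cent_modeX // xp1.
by rewrite !cent_mode1 ?divr1.
Qed.

Lemma center_p_rank_le_proj_faithful p : prime p ->
    (forall g, g \in 'Z(G) ->
       (exists c : algC, forall i, rho i g = (c%:M)%R) -> g = 1) ->
  ('r_p('Z(G)) <= k)%N.
Proof.
move=> p_pr faithZ; have [E /pnElemPcard[sEZ abelE cardE]] := p_rank_witness p 'Z(G).
have [_ Ep1] := abelemP p_pr abelE.
have ZE x : x \in E -> x \in 'Z(G) := subsetP sEZ x.
have [n def_p] : exists n, p = n.+1 by exists p.-1; rewrite prednK ?prime_gt0.
have [w prim_w] := C_prim_root_exists (ltn0Sn n).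
pose Phi x := [ffun j => prim_root_index n w (mode_ratio j x)].
have PhiK j x : x \in E -> (w ^+ Phi x j = mode_ratio j x)%R.
  move=> Ex; rewrite ffunE prim_root_indexK //.
  by rewrite -def_p mode_ratio_unity_root ?ZE ?Ep1.
have inj_Phi : {in E &, injective Phi}.
  move=> x y Ex Ey eq_Phi; apply/divg1_eq/faithZ.
    by rewrite groupM ?groupV ?ZE.
  exists (lambda ord0 x / lambda ord0 y)%R; apply: eq_mode_ratio_scalar; rewrite ?ZE //.
  by move=> j; rewrite -PhiK // -PhiK // eq_Phi.
rewrite -(leq_exp2l _ _ (prime_gt1 p_pr)) -cardE -(card_in_imset inj_Phi).
by apply: leq_trans (max_card _) _; rewrite card_ffun !card_ord def_p.
Qed.

End ProjectivelyFaithfulCenter.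

Theorem lemma6p1 (gT : finGroupType) (G : {group gT}) (p : nat) (r k : nat)
  (deg : 'I_k -> nat)
  (rho : forall i : 'I_k, mx_representation algC G (deg i)) :
  prime p -> p.-group G -> ~~ abelian G ->
  'm('Z(G)) = r ->
  (forall i, mx_irreducible (rho i)) ->
  (forall g, g \in G ->
     (exists c : algC, forall i : 'I_k, rho i g = (c%:M)%R) -> g = 1%g) ->
  ((~ ('Z(G) \isog elemab2 2) /\ ~ ('Z(G) \isog elemab2 4)) -> (r < k)%N) /\
  (('Z(G) \isog elemab2 2 \/ 'Z(G) \isog elemab2 4) -> (r - 1 < k)%N).
Proof.
move=> p_pr pG not_cGG rankZ irr_rho faith.
suff r_lt_k : (r < k)%N by split=> _ //; apply: leq_ltn_trans (leq_subr 1 r) r_lt_k.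
case: k deg rho irr_rho faith => [|k] deg rho irr_rho faith.
  (* with no representations every element of G is projectively trivial *)
  case/negP: not_cGG; apply: (abelianS _ (abelian1 gT)).
  by apply/subsetP=> g Gg; rewrite inE; apply/eqP/faith => //; exists 0%R => -[].
have pZ : p.-group 'Z(G) := pgroupS (center_sub G) pG.
rewrite -rankZ grank_abelian ?center_abelian // (rank_pgroup pZ) ltnS.
apply: (center_p_rank_le_proj_faithful irr_rho p_pr) => g Zg.
exact/faith/(subsetP (center_sub G)).
Qed.
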